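(* Let $F$ be an infinite field, let $n>1$ be an integer, and let $p\in F[x]$ be a nonconstant polynomial. Then every matrix in $\mathrm{M}_n(F)$ can be expressed as a product of two elements of $p[\mathrm{M}_n(F),\mathrm{M}_n(F)]=\{p(AB)-p(BA)\mid A,B\in\mathrm{M}_n(F)\}$. *)

From mathcomp Require Import all_boot all_order all_algebra.
Set Implicit Arguments. Unset Strict Implicit. Unset Printing Implicit Defensive.
Import GRing.Theory.
Local Open Scope ring_scope.

Definition infinite_type (T : eqType) : Prop := ~ (exists s : seq T, forall x : T, x \in s).

Definition mx_peval (F : fieldType) (n : nat) (p : {poly F}) (A : 'M[F]_n) : 'M[F]_n :=
  \sum_(i < size p) p`_i *: iter i (mulmx A) (1%:M).

Definition in_p_commutators (F : fieldType) (n : nat) (p : {poly F}) (M : 'M[F]_n) : Prop :=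
  exists A B : 'M[F]_n, M = mx_peval p (A *m B) - mx_peval p (B *m A).

(* For invertible P, Q and D = diag(p(c_1), ..., p(c_n)), the pair
   A = P Q^-1, B = Q diag(c) P^-1 gives p(AB) - p(BA) = P D P^-1 - Q D Q^-1.
   As F is infinite the p(c_i) can be taken pairwise distinct, so that every
   triangular matrix with diagonal D is similar to D; writing a matrix with zero
   diagonal as (D + its lower part) - (D - its upper part) puts it in
   p[M_n, M_n], and by Fillmore's theorem so is every traceless matrix that is
   not a nonzero scalar.
   A scalar matrix is a cyclic permutation matrix times a multiple of its
   inverse, both with zero diagonal.  A nonscalar M is X (X^-1 M) with X
   invertible and both factors traceless and nonscalar.  More generally tr X
   can be prescribed: conjugate M to a block form [a r; c A] with c <> 0 and A
   nonscalar, factor A with tr X1 = tr X - 1, and take X = [1 x; 0 X1] with x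
   chosen to cancel the corner of X^-1 M.  The 2 x 2 case is done with explicit
   matrices, again using that F is infinite. *)

From mathcomp Require Import all_boot all_order all_algebra.
From mathcomp Require Import fingroup perm ring.
From Stdlib Require Import Classical.
Set Implicit Arguments. Unset Strict Implicit. Unset Printing Implicit Defensive.
Import GRing.Theory.
Local Open Scope ring_scope.

Section MatrixFacts.
Variable F : fieldType.

Lemma trmx11 (a : 'M[F]_1) : a^T = a.
Proof. by rewrite [a]mx11_scalar tr_scalar_mx. Qed.

Lemma mxtrace11 (a : 'M[F]_1) : \tr a = a 0 0.
Proof. by rewrite /mxtrace big_ord1. Qed.

Lemma mx11_neq0 (c : 'M[F]_1) : (c != 0) = (c 0 0 != 0).
Proof.
congr negb; apply/eqP/eqP => [-> | c0]; first by rewrite mxE.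
by rewrite [c]mx11_scalar c0 raddf0.
Qed.

Lemma trmx_neq0 m n (B : 'M[F]_(m, n)) : (B^T != 0) = (B != 0).
Proof. by rewrite -trmx0 (inj_eq trmx_inj). Qed.

Lemma delta_row_mulmx m (j : 'I_m) (c : 'cV[F]_m) : delta_mx 0 j *m c = (c j 0)%:M.
Proof. by rewrite -rowE [row j c]mx11_scalar !mxE. Qed.

Lemma offdiag_nonscalar m (A : 'M[F]_m) i j : i != j -> A i j != 0 -> ~~ is_scalar_mx A.
Proof.
move=> ij Aij; apply/is_scalar_mxP => -[s As].
by move: Aij; rewrite As mxE (negbTE ij) mulr0n eqxx.
Qed.

Lemma nonscalar_tr m (A : 'M[F]_m) : ~~ is_scalar_mx A -> ~~ is_scalar_mx A^T.
Proof.
apply: contra => /is_scalar_mxP [s As].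
by rewrite -[A]trmxK As tr_scalar_mx scalar_mx_is_scalar.
Qed.

Lemma block_mx_nonscalar m (a : 'M[F]_1) r c (A : 'M[F]_m) :
  ~~ is_scalar_mx A -> ~~ is_scalar_mx (block_mx a r c A).
Proof.
move=> A_ns; apply/is_scalar_mxP => -[s].
by rewrite scalar_mx_block => /eq_block_mx [_ _ _ As]; rewrite As scalar_mx_is_scalar in A_ns.
Qed.

Lemma unitmx_scalar_sub_trig n (A : 'M[F]_n) (a : F) :
  is_trig_mx A -> (forall i, A i i != a) -> a%:M - A \in unitmx.
Proof.
move=> /is_trig_mxP A_trig A_a; rewrite unitmxE det_trig.
  by rewrite unitfE; apply/prodf_neq0 => i _; rewrite !mxE eqxx subr_eq0 eq_sym.
by apply/is_trig_mxP => i j ij; rewrite !mxE A_trig // -val_eqE /= (ltn_eqF ij) subr0.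
Qed.

End MatrixFacts.

Section Similarity.
Variable F : fieldType.

Definition similar n (A B : 'M[F]_n) := exists2 P, P \in unitmx & B = P *m A *m invmx P.

Variable n : nat.
Implicit Types (A B C P Q : 'M[F]_n).

Lemma invmx_eq P Q : P *m Q = 1%:M -> invmx P = Q.
Proof.
move=> PQ; have [Pu _] := mulmx1_unit PQ.
by rewrite -[invmx P]mulmx1 -PQ mulmxA mulVmx // mul1mx.
Qed.

Lemma similar_conj P Q A : P *m Q = 1%:M -> similar A (P *m A *m Q).
Proof. by move=> PQ; exists P; [case: (mulmx1_unit PQ) | rewrite (invmx_eq PQ)]. Qed.

Lemma similar_intro A B P :
  P \in unitmx -> B *m P = P *m A -> similar A B.
Proof. by move=> Pu BP; exists P => //; rewrite -BP mulmxK. Qed.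

Lemma similar_inverse_pair A B : similar A B ->
  exists P Q, [/\ P *m Q = 1%:M, Q *m P = 1%:M & B = P *m A *m Q].
Proof. by move=> [P Pu ->]; exists P, (invmx P); rewrite mulmxV // mulVmx. Qed.

Lemma similar_refl A : similar A A.
Proof. by exists 1%:M; rewrite ?unitmx1 // invmx1 mulmx1 mul1mx. Qed.

Lemma similar_sym A B : similar A B -> similar B A.
Proof.
move=> [P Pu ->]; exists (invmx P); rewrite ?unitmx_inv // invmxK.
by rewrite !mulmxA mulVmx // mul1mx mulmxKV.
Qed.

Lemma similar_trans A B C : similar A B -> similar B C -> similar A C.
Proof.
move=> [P Pu ->] [Q Qu ->]; exists (Q *m P); first by rewrite unitmx_mul Qu.
have QP : Q *m P *m (invmx P *m invmx Q) = 1%:M.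
  by rewrite mulmxA -(mulmxA Q) mulmxV // mulmx1 mulmxV.
by rewrite (invmx_eq QP) !mulmxA.
Qed.

Lemma similar_tr A B : similar A B -> similar A^T B^T.
Proof.
move=> /similar_inverse_pair [P [Q [PQ _ ->]]]; rewrite !trmx_mul mulmxA.
by apply: similar_conj; rewrite -trmx_mul PQ trmx1.
Qed.

Lemma similar_trV A B : similar A^T B^T -> similar A B.
Proof. by move/similar_tr; rewrite !trmxK. Qed.

Lemma similar_trace A B : similar A B -> \tr B = \tr A.
Proof.
by move=> /similar_inverse_pair [P [Q [_ QP ->]]]; rewrite mxtrace_mulC mulmxA QP mul1mx.
Qed.

Lemma similar_scalar A B : similar A B -> is_scalar_mx B = is_scalar_mx A.
Proof.
suff imp A' B' : similar A' B' -> is_scalar_mx A' -> is_scalar_mx B'.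
  by move=> AB; apply/idP/idP; apply: imp => //; apply: similar_sym.
move=> /similar_inverse_pair [P [Q [PQ _ ->]]] /is_scalar_mxP [a ->].
by rewrite mul_mx_scalar -scalemxAl PQ scalemx1 scalar_mx_is_scalar.
Qed.

End Similarity.

Lemma similar_trig_diag (F : fieldType) n (A : 'M[F]_n) :
  is_trig_mx A -> injective (fun i => A i i) -> similar (diag_mx (\row_i A i i)) A.
Proof.
move: n A; apply: trigsqmx_ind => [|n x c A A_trig IH] A_inj.
  by rewrite [diag_mx _]thinmx0; apply: similar_refl.
have [P Pu AP] : similar (diag_mx (\row_i A i i)) A.
  by apply: IH => i j ij; apply/rshift_inj/A_inj; rewrite /= !block_mxEdr.
pose g := invmx ((x 0 0)%:M - A) *m c.
have xA i : A i i != x 0 0.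
  apply/eqP => Ax; have := A_inj (rshift 1 i) (lshift n 0).
  by rewrite /= block_mxEdr block_mxEul Ax => /(_ erefl) /eqP; rewrite eq_rlshift.
have xAu : (x 0 0)%:M - A \in unitmx by exact: unitmx_scalar_sub_trig.
apply: (similar_intro (P := block_mx 1%:M 0 g P)).
  by rewrite unitmxE det_lblock det1 mul1r -unitmxE.
have -> : \row_i (block_mx x 0 c A) i i = row_mx x (\row_i A i i).
  apply/rowP => i; rewrite -(splitK i); case: (split i) => j /=.
    by rewrite mxE row_mxEl block_mxEul !ord1.
  by rewrite mxE row_mxEr block_mxEdr mxE.
have dx : diag_mx x = (x 0 0)%:M by apply/matrixP => i j; rewrite !ord1 !mxE.
rewrite diag_mx_row !mulmx_block dx !mulmx0 !mul0mx !mulmx1 !mul1mx !addr0 !add0r.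
congr block_mx; first by rewrite -mx11_scalar.
  by rewrite -[c](mulKVmx xAu) -/g mulmxBl mul_scalar_mx mul_mx_scalar subrK.
by rewrite {1}AP mulmxKV.
Qed.

Section BlockSimilarity.
Variables (F : fieldType) (m : nat).
Implicit Types (a : 'M[F]_1) (r : 'rV[F]_m) (c : 'cV[F]_m) (A : 'M[F]_m).

Lemma similar_block_shear_r a r c A (u : 'rV[F]_m) :
  similar (block_mx a r c A)
    (block_mx (a + u *m c) (r + u *m A - (a + u *m c) *m u) c (A - c *m u)).
Proof.
have PQ : block_mx 1%:M u 0 1%:M *m block_mx 1%:M (- u) 0 1%:M = 1%:M.
  by rewrite mulmx_block !mulmx1 !mul1mx !mul0mx !mulmx0 !addr0 add0r addNr -scalar_mx_block.
have := similar_conj (block_mx a r c A) PQ.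
rewrite !mulmx_block !mulmx1 !mul1mx !mul0mx !mulmx0 !addr0 !add0r !mulmxN.
by rewrite [_ + (r + _)]addrC [_ + A]addrC.
Qed.

Lemma similar_block_shear_c a r c A (v : 'cV[F]_m) :
  similar (block_mx a r c A)
    (block_mx (a - r *m v) r (c + v *m a - (A + v *m r) *m v) (A + v *m r)).
Proof.
have PQ : block_mx 1%:M 0 v 1%:M *m block_mx 1%:M 0 (- v) 1%:M = 1%:M.
  by rewrite mulmx_block !mulmx1 !mul1mx !mul0mx !mulmx0 !addr0 !add0r addrN -scalar_mx_block.
have := similar_conj (block_mx a r c A) PQ.
rewrite !mulmx_block !mulmx1 !mul1mx !mul0mx !mulmx0 !addr0 !add0r !mulmxN.
by rewrite [v *m a + c]addrC [v *m r + A]addrC.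
Qed.

Lemma similar_block_dr a r c A (P : 'M[F]_m) : P \in unitmx ->
  similar (block_mx a r c A) (block_mx a (r *m invmx P) (P *m c) (P *m A *m invmx P)).
Proof.
move=> Pu; have PQ : block_mx (1%:M : 'M_1) 0 0 P *m block_mx 1%:M 0 0 (invmx P) = 1%:M.
  by rewrite mulmx_block !mulmx1 !mul0mx !mulmx0 !addr0 !add0r mulmxV // -scalar_mx_block.
have := similar_conj (block_mx a r c A) PQ.
by rewrite !mulmx_block !mulmx1 !mul1mx !mul0mx !mulmx0 !addr0 !add0r.
Qed.

End BlockSimilarity.

Section NonscalarBlocks.
Variable F : fieldType.

Lemma similar_block_corner0_c m (a : 'M[F]_1) r c (A : 'M[F]_m) : c != 0 ->
  exists r' A', similar (block_mx a r c A) (block_mx 0 r' c A').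
Proof.
move=> /cV0Pn [j cj]; pose u : 'rV_m := (- a 0 0 / c j 0) *: delta_mx 0 j.
have -> : 0 = a + u *m c.
  by rewrite -scalemxAl delta_row_mulmx scale_scalar_mx divfK // raddfN {1}[a]mx11_scalar subrr.
by eexists; eexists; apply: similar_block_shear_r.
Qed.

Lemma similar_block_corner0_r m (a : 'M[F]_1) r c (A : 'M[F]_m) : r != 0 ->
  exists c' A', similar (block_mx a r c A) (block_mx 0 r c' A').
Proof.
move=> r0; have [r' [A' sim]] := similar_block_corner0_c a c^T A^T (etrans (trmx_neq0 r) r0).
exists r'^T, A'^T; apply: similar_trV.
by rewrite !tr_block_mx !trmxK trmx11 trmx0.
Qed.

Lemma similar_block_col_nz m (a : 'M[F]_1) (A : 'M[F]_m) :
  ~~ is_scalar_mx (block_mx a 0 0 A) ->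
  exists2 c, c != 0 & similar (block_mx a 0 0 A) (block_mx a 0 c A).
Proof.
move=> ns; have /matrix0Pn [i [j Aij]] : A - (a 0 0)%:M != 0.
  apply: contraNneq ns => /eqP; rewrite subr_eq0 => /eqP ->.
  by rewrite {1}[a]mx11_scalar -scalar_mx_block scalar_mx_is_scalar.
have := similar_block_shear_c a 0 0 A (delta_mx j 0).
rewrite !mul0mx !mulmx0 subr0 add0r addr0 => sim; eexists; last exact: sim.
apply/cV0Pn; exists i; apply: contraNneq Aij.
rewrite -colE !mxE big_ord1 !mxE eqxx andbT mulr_natl.
by move=> /eqP; rewrite subr_eq0 => /eqP ->; rewrite subrr.
Qed.

Lemma similar_block_offdiag m (a : 'M[F]_1) r c (A : 'M[F]_m) :
  ~~ is_scalar_mx (block_mx a r c A) ->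
  exists c', similar (block_mx a r c A) (block_mx a r c' A) /\ (c' != 0 \/ r != 0).
Proof.
move=> ns; have [r0 | r0] := eqVneq r 0; last first.
  by exists c; split; [exact: similar_refl | right].
have [c0 | c0] := eqVneq c 0; last by exists c; split; [exact: similar_refl | left].
move: ns; rewrite r0 c0 => /similar_block_col_nz [c' c'0 sim].
by exists c'; split; [exact: sim | left].
Qed.

Lemma similar_block_scalar_c m (a : 'M[F]_1) r (c : 'cV[F]_m.+2) (s : F) : c != 0 ->
  exists r' A', similar (block_mx a r c s%:M) (block_mx a r' c A') /\ ~~ is_scalar_mx A'.
Proof.
move=> /cV0Pn [j cj]; set k := lift j (ord0 : 'I_m.+1).
(* [u *m c = 0] keeps the corner, and [s%:M - c *m u] has entry [c_j ^+ 2] at (j, k). *)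
pose u : 'rV_m.+2 := c k 0 *: delta_mx 0 j - c j 0 *: delta_mx 0 k.
have uc : u *m c = 0.
  by rewrite mulmxBl -!scalemxAl !delta_row_mulmx !scale_scalar_mx mulrC subrr.
have := similar_block_shear_r a r c s%:M u; rewrite uc addr0 => sim.
eexists; exists (s%:M - c *m u); split; first exact: sim.
have jk : j != k by exact: neq_lift.
apply: (offdiag_nonscalar jk); rewrite !mxE big_ord1 !mxE -/k [k == j]eq_sym (negbTE jk) !eqxx /=.
by rewrite mulr0n mulr0 mulr1 !sub0r mulrN opprK mulf_neq0.
Qed.

Lemma similar_block_scalar m (a : 'M[F]_1) r (c : 'cV[F]_m.+2) (s : F) :
  c != 0 \/ r != 0 -> exists r' c' A',
  [/\ similar (block_mx a r c s%:M) (block_mx a r' c' A'), ~~ is_scalar_mx A'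
     & c' != 0 \/ r' != 0].
Proof.
case=> [c0 | r0].
  have [r' [A' [sim ns]]] := similar_block_scalar_c a r s c0.
  by exists r', c, A'; split => //; left.
have [c' [A' [sim ns]]] := similar_block_scalar_c a c^T s (etrans (trmx_neq0 r) r0).
exists r, c'^T, A'^T; split; [|exact: nonscalar_tr | by right].
by apply: similar_trV; rewrite !tr_block_mx !trmxK trmx11 tr_scalar_mx.
Qed.

Lemma similar_block_nonscalar_dr m (a : 'M[F]_1) r c (A : 'M[F]_m.+2) :
  ~~ is_scalar_mx (block_mx a r c A) -> exists r' c' A',
  [/\ similar (block_mx a r c A) (block_mx a r' c' A'), ~~ is_scalar_mx A'
    & c' != 0 \/ r' != 0].
Proof.
move=> ns; have [c' [sim rc]] := similar_block_offdiag ns.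
have [/is_scalar_mxP [s As] | A_ns] := boolP (is_scalar_mx A); last by exists r, c', A.
rewrite As in sim *; have [r'' [c'' [A'' [sim' ns' rc']]]] := similar_block_scalar a s rc.
by exists r'', c'', A''; split => //; exact: similar_trans sim sim'.
Qed.

Lemma similar_corner0 m (M : 'M[F]_(1 + m)) : ~~ is_scalar_mx M ->
  exists r c A, similar M (block_mx 0 r c A).
Proof.
rewrite -[M]submxK => /similar_block_offdiag [c [sim [c0 | r0]]].
  have [r' [A' sim']] := similar_block_corner0_c (ulsubmx M) (ursubmx M) (drsubmx M) c0.
  by exists r', c, A'; exact: similar_trans sim sim'.
have [c' [A' sim']] := similar_block_corner0_r (ulsubmx M) c (drsubmx M) r0.
by exists (ursubmx M), c', A'; exact: similar_trans sim sim'.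
Qed.

End NonscalarBlocks.

Section Fillmore.
Variable F : fieldType.

Lemma similar_block_trace0 m (A : 'M[F]_(1 + m)) r c (A1 : 'M[F]_m) :
  similar A (block_mx 0 r c A1) -> \tr A = 0 -> \tr A1 = 0.
Proof. by move=> /similar_trace; rewrite mxtrace_block mxtrace0 add0r => ->. Qed.

Lemma block_mx_zero_diag m r c (B : 'M[F]_m) : (forall i, B i i = 0) ->
  forall i, block_mx (0 : 'M_1) r c B i i = 0.
Proof.
move=> B0 i; rewrite -(splitK i); case: (split i) => j /=.
  by rewrite block_mxEul mxE.
by rewrite block_mxEdr B0.
Qed.

Lemma similar_zero_diag m (A : 'M[F]_(1 + m)) : \tr A = 0 -> A = 0 \/ ~~ is_scalar_mx A ->
  exists2 B, similar A B & forall i, B i i = 0.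
Proof.
elim: m A => [|m IH] A trA0 A_ok.
  by exists A => [|i]; [exact: similar_refl | rewrite ord1 -mxtrace11].
case: A_ok => [-> | A_ns].
  by exists 0 => [|i]; [exact: similar_refl | rewrite mxE].
have [r [c [A1 [sim A1_ok]]]] :
    exists r c (A1 : 'M_m.+1),
      similar A (block_mx (0 : 'M_1) r c A1) /\ (A1 = 0 \/ ~~ is_scalar_mx A1).
  have [r [c [A1 sim]]] := similar_corner0 A_ns.
  have A_ns' : ~~ is_scalar_mx (block_mx 0 r c A1) by rewrite (similar_scalar sim).
  case: m A r c A1 {IH A_ns} trA0 sim A_ns' => [|m] A r c A1 trA0 sim A_ns'.
    exists r, c, A1; split => //; left.
    by rewrite [A1]mx11_scalar -mxtrace11 (similar_block_trace0 sim trA0) raddf0.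
  have [r' [c' [A1' [sim' A1'_ns _]]]] := similar_block_nonscalar_dr A_ns'.
  by exists r', c', A1'; split; [exact: similar_trans sim sim' | right].
have [B1 [P Pu ->] B1_0] := IH A1 (similar_block_trace0 sim trA0) A1_ok.
exists (block_mx 0 (r *m invmx P) (P *m c) (P *m A1 *m invmx P)).
  exact: similar_trans sim (similar_block_dr _ _ _ _ Pu).
exact: block_mx_zero_diag.
Qed.

End Fillmore.

Section InfiniteField.
Variables (F : fieldType) (F_inf : infinite_type F).

Lemma infinite_notin (s : seq F) : exists x, x \notin s.
Proof.
apply: NNPP => no_x; apply: F_inf; exists s => x.
by apply/negPn/negP => x_s; apply: no_x; exists x.
Qed.

Lemma infinite_nonroot (q : {poly F}) : q != 0 -> exists x, ~~ root q x.
Proof.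
move=> q0; apply: NNPP => all_roots; move/eqP: q0; apply.
have [s [s_uniq s_size]] : exists s : seq F, uniq s /\ size s = size q.
  elim: (size q) => [|k [s [s_uniq <-]]]; first by exists [::].
  by have [x x_s] := infinite_notin s; exists (x :: s); rewrite /= x_s.
apply: (roots_geq_poly_eq0 _ s_uniq); last by rewrite s_size.
by apply/allP => x _; apply/negPn/negP => x_root; apply: all_roots; exists x.
Qed.

Lemma infinite_injective_values (p : {poly F}) n : (1 < size p)%N ->
  exists c : 'rV[F]_n, injective (fun i => p.[c 0 i]).
Proof.
move=> p_nonconst.
suff [s [s_uniq s_size]] : exists s : seq F, uniq (map (horner p) s) /\ size s = n.
  exists (\row_i s`_i) => i j; rewrite !mxE -!(nth_map 0 0 (horner p)) ?s_size //.
  by move/eqP; rewrite nth_uniq ?size_map ?s_size // => /eqP /val_inj.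
elim: n => [|k [s [s_uniq <-]]]; first by exists [::].
pose q := \prod_(v <- map (horner p) s) (p - v%:P).
have [|x q_x] := @infinite_nonroot q.
  rewrite prodf_seq_neq0; apply/allP => v _; rewrite subr_eq0.
  by apply: contraTneq p_nonconst => ->; rewrite size_polyC leqNgt ltnS leq_b1.
exists (x :: s); split => //=; rewrite s_uniq andbT.
apply: contra q_x => px_s; rewrite /root /q horner_prod (big_rem _ px_s) /=.
by rewrite !hornerE subrr mul0r.
Qed.

End InfiniteField.

Section PCommutators.
Variables (F : fieldType) (p : {poly F}).

Lemma mx_pevalE n (A : 'M[F]_n.+1) : mx_peval p A = horner_mx A p.
Proof.
rewrite /mx_peval -[X in horner_mx _ X]coefK poly_def rmorph_sum; apply: eq_bigr => i _.
rewrite /= horner_mxZ rmorphXn /= horner_mx_X; congr (_ *: _).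
by elim: (nat_of_ord i) => [|k IH] //=; rewrite IH exprS mulmxE.
Qed.

Lemma in_p_commutators_similar n (X Y : 'M[F]_n.+1) :
  similar X Y -> in_p_commutators p X -> in_p_commutators p Y.
Proof.
move=> [P Pu ->] [A [B ->]].
exists (P *m A *m invmx P), (P *m B *m invmx P).
have conjM U V : P *m U *m invmx P *m (P *m V *m invmx P) = P *m (U *m V) *m invmx P.
  by rewrite !mulmxA mulmxKV.
by rewrite !conjM !mx_pevalE !horner_mx_uconj // mulmxBr mulmxBl.
Qed.

Lemma in_p_commutators_conj_diag n (c : 'rV[F]_n.+1) (P Q : 'M[F]_n.+1) :
  P \in unitmx -> Q \in unitmx ->
  let D := diag_mx (map_mx (horner p) c) in
  in_p_commutators p (P *m D *m invmx P - Q *m D *m invmx Q).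
Proof.
move=> Pu Qu /=; exists (P *m invmx Q), (Q *m diag_mx c *m invmx P).
have -> : P *m invmx Q *m (Q *m diag_mx c *m invmx P) = P *m diag_mx c *m invmx P.
  by rewrite !mulmxA mulmxKV.
have -> : Q *m diag_mx c *m invmx P *m (P *m invmx Q) = Q *m diag_mx c *m invmx Q.
  by rewrite !mulmxA mulmxKV.
by rewrite !mx_pevalE !horner_mx_uconj // horner_mx_diag.
Qed.

Hypotheses (F_inf : infinite_type F) (p_nonconst : (1 < size p)%N).

Lemma in_p_commutators_zero_diag n (Z : 'M[F]_n.+1) :
  (forall i, Z i i = 0) -> in_p_commutators p Z.
Proof.
move=> Z0; have [c c_inj] := infinite_injective_values F_inf n.+1 p_nonconst.
set D := diag_mx (map_mx (horner p) c).
pose L := D + \matrix_(i, j) (Z i j *+ (j < i)).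
pose U := D - \matrix_(i, j) (Z i j *+ (i < j)).
have diagL i : L i i = p.[c 0 i] by rewrite !mxE eqxx ltnn mulr1n addr0.
have diagU i : U^T i i = p.[c 0 i] by rewrite !mxE eqxx ltnn mulr1n subr0.
have rowL : \row_i L i i = map_mx (horner p) c by apply/rowP => i; rewrite [LHS]mxE diagL mxE.
have rowU : \row_i U^T i i = map_mx (horner p) c by apply/rowP => i; rewrite [LHS]mxE diagU mxE.
have [P Pu LP] : similar D L.
  rewrite /D -rowL; apply: similar_trig_diag => [|i j]; last by rewrite /= !diagL => /c_inj.
  apply/is_trig_mxP => i j ij; rewrite !mxE -val_eqE /= (ltn_eqF ij) ltnNge ltnW //.
  by rewrite mulr0n addr0.
have [Q Qu UQ] : similar D U.
  rewrite -[U]trmxK -[D]tr_diag_mx; apply: similar_tr.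
  rewrite /D -rowU; apply: similar_trig_diag => [|i j]; last by rewrite /= !diagU => /c_inj.
  apply/is_trig_mxP => i j ij; rewrite !mxE -val_eqE /= (gtn_eqF ij) ltnNge ltnW //.
  by rewrite mulr0n subr0.
suff -> : Z = L - U by rewrite LP UQ; apply: in_p_commutators_conj_diag.
apply/matrixP => i j; rewrite !mxE opprB addrC addrA subrK.
by case: ltngtP => [_|_|/val_inj ->]; rewrite ?Z0 ?mulr0n ?mulr1n ?addr0 ?add0r.
Qed.

Lemma in_p_commutators_traceless n (X : 'M[F]_n.+1) :
  \tr X = 0 -> ~~ is_scalar_mx X -> in_p_commutators p X.
Proof.
move=> trX X_ns; have [B sim B0] := similar_zero_diag (m := n) trX (or_intror X_ns).
exact: in_p_commutators_similar (similar_sym sim) (in_p_commutators_zero_diag B0).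
Qed.

End PCommutators.

Section TraceSplit.
Variable F : fieldType.

Definition trace_split n (b : F) (M : 'M[F]_n) := exists X,
  [/\ X \in unitmx, \tr X = b, ~~ is_scalar_mx X,
      \tr (invmx X *m M) = 0 & ~~ is_scalar_mx (invmx X *m M)].

Lemma trace_split_intro n b (M X Y : 'M[F]_n) : X *m Y = 1%:M ->
  \tr X = b -> ~~ is_scalar_mx X -> \tr (Y *m M) = 0 -> ~~ is_scalar_mx (Y *m M) ->
  trace_split b M.
Proof. by move=> XY; exists X; rewrite (invmx_eq XY); split => //; case: (mulmx1_unit XY). Qed.

Lemma trace_split_similar n b (M N : 'M[F]_n) :
  similar M N -> trace_split b N -> trace_split b M.
Proof.
move=> /similar_inverse_pair [P [Q [PQ QP ->]]] [X [Xu trX X_ns trY Y_ns]].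
have simY : similar (invmx X *m (P *m M *m Q)) (Q *m invmx X *m P *m M).
  by have := similar_conj (invmx X *m (P *m M *m Q)) QP; rewrite !mulmxA -(mulmxA _ Q P) QP mulmx1.
have simX : similar X (Q *m X *m P) by exact: similar_conj.
apply: (trace_split_intro (X := Q *m X *m P) (Y := Q *m invmx X *m P)).
- by rewrite !mulmxA -(mulmxA _ P Q) PQ mulmx1 -(mulmxA Q) mulmxV // mulmx1 QP.
- by rewrite (similar_trace simX).
- by rewrite (similar_scalar simX).
- by rewrite (similar_trace simY).
- by rewrite (similar_scalar simY).
Qed.

Lemma trace_split_tr n b (M : 'M[F]_n) : trace_split b M^T -> trace_split b M.
Proof.
move=> [X [Xu trX X_ns trY Y_ns]].
have tr_YM : (invmx X)^T *m M = (M^T *m invmx X)^T by rewrite trmx_mul trmxK.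
have simY : similar (invmx X *m M^T) (M^T *m invmx X).
  by have := similar_conj (invmx X *m M^T) (mulmxV Xu); rewrite !mulmxA mulmxV // mul1mx.
apply: (trace_split_intro (X := X^T) (Y := (invmx X)^T)).
- by rewrite -trmx_mul mulVmx // trmx1.
- by rewrite mxtrace_tr.
- exact: nonscalar_tr.
- by rewrite tr_YM mxtrace_tr (similar_trace simY).
- by rewrite tr_YM; apply: nonscalar_tr; rewrite (similar_scalar simY).
Qed.

Lemma trace_split_block m b (a : 'M[F]_1) r c (A : 'M[F]_m) :
  c != 0 -> trace_split (b - 1) A -> trace_split b (block_mx a r c A).
Proof.
move=> c0 [X1 [X1u trX1 X1_ns trY1 Y1_ns]].
set w := invmx X1 *m c.
have /cV0Pn [j wj] : w != 0.
  by apply: contraNneq c0 => w0; rewrite -[c](mulKVmx X1u) -/w w0 mulmx0.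
pose x : 'rV_m := (a 0 0 / w j 0) *: delta_mx 0 j.
apply: (trace_split_intro (X := block_mx 1%:M x 0 X1)
                          (Y := block_mx 1%:M (- x *m invmx X1) 0 (invmx X1))).
- rewrite mulmx_block !mulmx1 !mul1mx !mul0mx !mulmx0 !addr0 add0r mulmxV //.
  by rewrite mulNmx addNr -scalar_mx_block.
- by rewrite mxtrace_block mxtrace1 trX1 addrC subrK.
- exact: block_mx_nonscalar.
- rewrite mulmx_block !mul1mx !mul0mx !add0r mxtrace_block trY1 addr0 !mulNmx -mulmxA.
  rewrite -/w -scalemxAl delta_row_mulmx scale_scalar_mx divfK //.
  by rewrite mxtrace11 !mxE eqxx mulr1n subrr.
- by rewrite mulmx_block !mul0mx !add0r; apply: block_mx_nonscalar.
Qed.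

End TraceSplit.

Section TwoByTwo.
Variable F : fieldType.

Definition mx2 (a b c d : F) : 'M[F]_(1 + 1) := block_mx a%:M b%:M c%:M d%:M.

Lemma mx2_mul a b c d a' b' c' d' :
  mx2 a b c d *m mx2 a' b' c' d' =
  mx2 (a * a' + b * c') (a * b' + b * d') (c * a' + d * c') (c * b' + d * d').
Proof. by rewrite /mx2 mulmx_block -!scalar_mxM -!raddfD. Qed.

Lemma mx2_1 : mx2 1 0 0 1 = 1%:M.
Proof. by rewrite /mx2 raddf0 -scalar_mx_block. Qed.

Lemma mx2_trace a b c d : \tr (mx2 a b c d) = a + d.
Proof. by rewrite /mx2 mxtrace_block !mxtrace_scalar !mulr1n. Qed.

Lemma mx2_nonscalar a b c d : [|| b != 0, c != 0 | a != d] -> ~~ is_scalar_mx (mx2 a b c d).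
Proof.
have entry x (B : 'M[F]_1) : x%:M = B -> x = B 0 0 by move<-; rewrite mxE eqxx mulr1n.
apply: contraL => /is_scalar_mxP [s]; rewrite /mx2 scalar_mx_block.
by move=> /eq_block_mx [/entry -> /entry -> /entry -> /entry ->]; rewrite !mxE !eqxx.
Qed.

Lemma block_mx11 (a r c d : 'M[F]_1) : block_mx a r c d = mx2 (a 0 0) (r 0 0) (c 0 0) (d 0 0).
Proof. by rewrite /mx2 -!mx11_scalar. Qed.

Lemma trace_split_mx2_upper a r c d b (t : F) :
  c != 0 -> t != 0 -> b - t != 0 -> (t != b - t) || (a * (b - t) + t * d != 0) ->
  trace_split b (mx2 a r c d).
Proof.
set y := b - t => c0 t0 y0 X_ns; set u := (a * y + t * d) / c.
apply: (trace_split_intro (X := mx2 t u 0 y) (Y := mx2 t^-1 (- u / (t * y)) 0 y^-1)).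
- by rewrite mx2_mul -mx2_1; congr mx2; field; rewrite ?t0 ?y0.
- by rewrite mx2_trace /y addrC subrK.
- apply: mx2_nonscalar; case/orP: X_ns => [-> | u0]; rewrite ?orbT //.
  by rewrite /u mulf_neq0 ?invr_eq0.
- by rewrite mx2_mul mx2_trace /u; field; rewrite ?t0 ?y0 ?c0.
- by rewrite mx2_mul; apply: mx2_nonscalar; rewrite mul0r add0r mulf_neq0 ?invr_eq0 ?orbT.
Qed.

Lemma trace_split_mx2_char2 a r c (x : F) :
  2 = 0 :> F -> c != 0 -> x + a != 0 -> x ^+ 2 + r * c != 0 ->
  trace_split 0 (mx2 a r c a).
Proof.
set D := x ^+ 2 + r * c => two0 c0 xa0 D0.
apply: (trace_split_intro (X := mx2 x r (- c) x) (Y := mx2 (x / D) (- r / D) (c / D) (x / D))).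
- by rewrite mx2_mul -mx2_1; congr mx2; rewrite /D; field; rewrite -/D D0.
- by rewrite mx2_trace -mulr2n -mulr_natr two0 mulr0.
- by apply: mx2_nonscalar; rewrite oppr_eq0 c0 orbT.
- rewrite mx2_mul mx2_trace.
  have -> : x / D * a + - r / D * c + (c / D * r + x / D * a) = x / D * a * 2 by ring.
  by rewrite two0 mulr0.
- rewrite mx2_mul; apply: mx2_nonscalar; apply/orP; right; apply/orP; left.
  have -> : c / D * a + x / D * c = c * (x + a) / D by ring.
  by rewrite mulf_neq0 ?invr_eq0 // mulf_neq0.
Qed.

End TwoByTwo.

Section TraceSplitNonscalar.
Variables (F : fieldType) (F_inf : infinite_type F).

Lemma trace_split_mx2 (a r c d b : F) : c != 0 -> trace_split b (mx2 a r c d).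
Proof.
move=> c0; have [two0 | two0] := eqVneq (2 : F) 0; last first.
  have [t] := infinite_notin F_inf [:: 0; b; b / 2].
  rewrite !inE !negb_or => /and3P [t0 tb t_half].
  apply: (trace_split_mx2_upper r c0 t0); first by rewrite subr_eq0 eq_sym.
  apply/orP; left; apply: contraNneq t_half => t_eq.
  by rewrite -[b](subrK t) -t_eq -mulr2n -[t *+ 2]mulr_natr mulfK.
have [b0 | b0] := eqVneq b 0; last first.
  have [t] := infinite_notin F_inf [:: 0; b].
  rewrite !inE negb_or => /andP [t0 tb].
  apply: (trace_split_mx2_upper r c0 t0); first by rewrite subr_eq0 eq_sym.
  apply/orP; left; apply: contraNneq b0 => t_eq.
  by rewrite -[b](subrK t) -t_eq -mulr2n -[t *+ 2]mulr_natr two0 mulr0.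
(* Only for [2 = 0], [b = 0] and [a = d] is no upper triangular factor suitable. *)
rewrite b0; have [<- | ad] := eqVneq a d; last first.
  have [t] := infinite_notin F_inf [:: 0]; rewrite inE => t0.
  apply: (trace_split_mx2_upper r c0 t0); first by rewrite sub0r oppr_eq0.
  have -> : a * (0 - t) + t * d = t * (d - a) by ring.
  by rewrite mulf_neq0 ?orbT // subr_eq0 eq_sym.
pose q := ('X + a%:P) * ('X^2 + (r * c)%:P).
have q0 : q != 0 by rewrite mulf_neq0 // monic_neq0 // ?monicXaddC ?monicXnaddC.
have [x] := infinite_nonroot F_inf q0.
rewrite /root !hornerE mulf_eq0 negb_or => /andP [xa0 D0].
exact: trace_split_mx2_char2 two0 c0 xa0 D0.
Qed.

Lemma trace_split_nonscalar m b (M : 'M[F]_(1 + m.+1)) :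
  ~~ is_scalar_mx M -> trace_split b M.
Proof.
elim: m b M => [|m IH] b M; rewrite -[M]submxK.
  move=> /similar_block_offdiag [c [sim [c0 | r0]]]; apply: (trace_split_similar sim).
    by rewrite block_mx11; apply: trace_split_mx2; rewrite -mx11_neq0.
  apply: trace_split_tr; rewrite tr_block_mx block_mx11.
  by apply: trace_split_mx2; rewrite mxE -mx11_neq0.
move=> /similar_block_nonscalar_dr [r [c [A [sim A_ns [c0 | r0]]]]].
all: apply: (trace_split_similar sim).
  exact: trace_split_block c0 (IH _ _ A_ns).
apply: trace_split_tr; rewrite tr_block_mx.
by apply: trace_split_block (IH _ _ (nonscalar_tr A_ns)); rewrite trmx_neq0.
Qed.

End TraceSplitNonscalar.

Lemma ordS_neq m (i : 'I_m.+2) : ordS i != i.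
Proof.
apply/eqP => /(congr1 val) /=; have := ltn_ord i; rewrite leq_eqVlt => /orP [/eqP iS | iS].
  by rewrite iS modnn => i0; move: iS; rewrite -i0.
by rewrite modn_small // => /eqP; rewrite eqn_leq ltnn.
Qed.

Lemma scalar_mx_zero_diag_factor (F : fieldType) m (s : F) :
  exists X Y : 'M[F]_m.+2, [/\ forall i, X i i = 0, forall i, Y i i = 0 & s%:M = X *m Y].
Proof.
pose P : 'M[F]_m.+2 := perm_mx (perm (@ordS_inj m.+2)).
have P0 i : P i i = 0 by rewrite /P /perm_mx !mxE permE (negbTE (ordS_neq i)).
exists P, (s *: P^T); split => [//|i|].
  by rewrite mxE [_^T _ _]mxE P0 mulr0.
by rewrite -scalemxAr /P tr_perm_mx -perm_mxM mulgV perm_mx1 scalemx1.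
Qed.

Theorem theorem4p2 (F : fieldType) (n : nat) (p : {poly F})
  (hF : infinite_type F) (hn : (1 < n)%N) (hp : (1 < size p)%N) :
  forall M : 'M[F]_n, exists X Y : 'M[F]_n,
    in_p_commutators p X /\ in_p_commutators p Y /\ M = X *m Y.
Proof.
case: n hn => [|[|m]] // _ M.
have [/is_scalar_mxP [s ->] | M_ns] := boolP (is_scalar_mx M).
  have [X [Y [X0 Y0 ->]]] := scalar_mx_zero_diag_factor m s.
  by exists X, Y; split; [|split] => //; apply: (in_p_commutators_zero_diag hF hp).
have [X [Xu trX X_ns trY Y_ns]] := trace_split_nonscalar (m := m) hF 0 M_ns.
exists X, (invmx X *m M); split; last split.
- exact: (in_p_commutators_traceless hF hp trX X_ns).
- exact: (in_p_commutators_traceless hF hp trY Y_ns).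
- by rewrite mulmxA mulmxV // mul1mx.
Qed.
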